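(* Let $w\geqslant 4$ be an even integer and let $L_1$ be the graph with vertex set $\mathbb{Z}_{w+1}\cup\{\infty\}$ whose edge set consists of all pairs of distinct vertices except the pairs $\{x,-x\}$ for $x\in\{1,\dots,w/2\}$ and the pairs $\{1,\infty\}$, $\{0,2\}$, $\{1,2\}$. Then (i) $\chi'(L_1)=w$; and (ii) in any proper $w$-edge colouring of $L_1$, the set of colours that hit vertex $1$ equals the set of colours that hit vertex $2$.
   Context: $\mathbb{Z}_{w+1}$ is the additive group of integers modulo $w+1$, and $\infty$ is an extra vertex. $\chi'$ denotes chromatic index. In an edge colouring, a colour hits a vertex if some edge of that colour is incident with it. *)

From mathcomp Require Import all_boot all_order all_algebra.
Set Implicit Arguments. Unset Strict Implicit. Unset Printing Implicit Defensive.
Import GRing.Theory.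
Local Open Scope ring_scope.

(* A simple graph on a finite type T is given by an adjacency relation adj,
   assumed symmetric and irreflexive where relevant (L1 below is both). *)

Definition proper_edge_colouring (T : finType) (adj : rel T) (k : nat)
    (c : T -> T -> 'I_k) : Prop :=
  (forall u v, adj u v -> c u v = c v u) /\
  (forall u v1 v2, adj u v1 -> adj u v2 -> v1 != v2 -> c u v1 != c u v2).

Definition edge_colourable (T : finType) (adj : rel T) (k : nat) : Prop :=
  exists c : T -> T -> 'I_k, proper_edge_colouring adj c.

Definition chromatic_index_eq (T : finType) (adj : rel T) (k : nat) : Prop :=
  edge_colourable adj k /\ forall j, (j < k)%N -> ~ edge_colourable adj j.

Definition colours_at (T : finType) (adj : rel T) (k : nat)
    (c : T -> T -> 'I_k) (v : T) : {set 'I_k} :=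
  [set i | [exists u, adj v u && (c v u == i)]].

(* Vertex set Z_{w+1} ∪ {∞}: None is ∞, Some x is x ∈ 'Z_(w+1) (w >= 4). *)
Definition L1_vert (w : nat) := option 'Z_(w + 1).

Definition L1_nonedge (w : nat) (a b : 'Z_(w + 1)) : bool :=
  [exists x : 'Z_(w + 1),
     [&& (1 <= (x : nat))%N, ((x : nat) <= w./2)%N &
         ((a == x) && (b == - x)) || ((a == - x) && (b == x))]]
  || ((a == 0) && (b == 2%:R)) || ((a == 2%:R) && (b == 0))
  || ((a == 1) && (b == 2%:R)) || ((a == 2%:R) && (b == 1)).

Definition L1_adj (w : nat) : rel (L1_vert w) :=
  fun u v =>
    match u, v with
    | None, None => false
    | None, Some b => b != 1
    | Some a, None => a != 1
    | Some a, Some b => (a != b) && ~~ L1_nonedge a b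
    end.

From mathcomp Require Import all_boot all_order all_algebra zify.
Set Implicit Arguments. Unset Strict Implicit. Unset Printing Implicit Defensive.
Import GRing.Theory.
Local Open Scope ring_scope.

(* Every vertex other than 1 and 2 misses exactly one other vertex, so the
   maximum degree is w.  The colouring {a,b} |-> (a+b)/2, {a,oo} |-> a (and
   {0,oo} |-> 1) uses only the w nonzero residues of Z_(w+1): the non-edges
   {x,-x}, {0,2} and {1,oo} are exactly the pairs on which it would vanish or
   clash.  Hence chi'(L1) = w, and in a w-colouring every vertex other than 1
   and 2 sees every colour.  A colour class is a matching, so it hits an even
   number of vertices; since L1 has w+2 vertices, a colour hitting exactly one
   of 1 and 2 would hit an odd number w+1 of them. *)

Lemma involution_moved_even (T : finType) (p : T -> T) :
  involutive p -> ~~ odd #|[set x | p x != x]|.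
Proof.
move=> pK; set A := [set x | p x != x].
(* B keeps the member of smaller rank of each pair {x, p x}. *)
pose B := [set x in A | enum_rank x < enum_rank (p x)]%N.
have sBA : B \subset A by apply/subsetP => x; rewrite inE => /andP[].
have defBC : A :\: B = p @^-1: B.
  apply/setP => x; rewrite !inE pK eq_sym andbC; case: (eqVneq (p x) x) => //= pxx.
  by rewrite -leqNgt leq_eqVlt val_eqE (inj_eq enum_rank_inj) (negbTE pxx).
rewrite -(cardsID B A) (setIidPr sBA) defBC card_preimset ?addnn ?odd_double //.
exact: inv_inj pK.
Qed.

Definition degree (T : finType) (adj : rel T) (v : T) : nat := #|[set u | adj v u]|.

Section ProperEdgeColouring.

Variables (T : finType) (adj : rel T) (k : nat) (c : T -> T -> 'I_k).
Hypothesis c_proper : proper_edge_colouring adj c.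

Lemma colour_inj v : {in [set u | adj v u] &, injective (c v)}.
Proof.
move=> u1 u2; rewrite !inE => vu1 vu2 eq_c; apply/eqP/negPn/negP => ne.
by have := c_proper.2 v u1 u2 vu1 vu2 ne; rewrite eq_c eqxx.
Qed.

Lemma colours_atE v : colours_at adj c v = c v @: [set u | adj v u].
Proof.
apply/setP => i; rewrite inE; apply/existsP/imsetP => [[u /andP[vu /eqP <-]]|[u]].
  by exists u; rewrite ?inE.
by rewrite inE => vu ->; exists u; rewrite vu eqxx.
Qed.

Lemma card_colours_at v : #|colours_at adj c v| = degree adj v.
Proof. by rewrite colours_atE card_in_imset //; exact: colour_inj. Qed.

Lemma degree_le_colours v : (degree adj v <= k)%N.
Proof. by rewrite -card_colours_at -[k in (_ <= k)%N]card_ord max_card. Qed.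

Lemma colours_at_full v : (k <= degree adj v)%N -> colours_at adj c v = setT.
Proof.
by move=> le_k; apply/eqP; rewrite eqEcard subsetT cardsT card_ord card_colours_at.
Qed.

Hypotheses (adj_sym : symmetric adj) (adj_irr : irreflexive adj).

Lemma colour_class_even i : ~~ odd #|[set v | i \in colours_at adj c v]|.
Proof.
pose mate v := odflt v [pick u | adj v u && (c v u == i)].
have mateP v u : adj v u -> c v u = i -> mate v = u.
  move=> vu cvu; rewrite /mate; case: pickP => [u' /andP[vu' /eqP cvu'] | /(_ u)].
    by apply: (@colour_inj v); rewrite ?inE ?cvu' ?cvu.
  by rewrite vu cvu eqxx.
have mate_edge v : i \in colours_at adj c v -> adj v (mate v) /\ c (mate v) v = i.
  rewrite inE => /existsP[u /andP[vu /eqP cvu]].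
  by rewrite (mateP v u) // -(c_proper.1 v u vu).
have mate_out v : i \notin colours_at adj c v -> mate v = v.
  move=> miss; rewrite /mate; case: pickP => //= u /andP[vu /eqP cvu].
  by case/negP: miss; rewrite inE; apply/existsP; exists u; rewrite vu cvu eqxx.
have mateK : involutive mate.
  move=> v; have [hit|/mate_out mv] := boolP (i \in colours_at adj c v); last by rewrite !mv.
  by have [vu cuv] := mate_edge v hit; apply: mateP; rewrite // adj_sym.
suff /eq_card <- : [set v | mate v != v] =i [set v | i \in colours_at adj c v].
  exact: involution_moved_even.
move=> v; rewrite [in LHS]inE [in RHS]in_set.
have [hit|/mate_out ->] := boolP (i \in colours_at adj c v); last by rewrite eqxx.
by have [vu _] := mate_edge v hit; apply: contraTneq vu => ->; rewrite adj_irr.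
Qed.

Lemma colours_at_eq_of_full x y :
    ~~ odd #|T| -> (forall v, v != x -> v != y -> colours_at adj c v = setT) ->
  colours_at adj c x = colours_at adj c y.
Proof.
move=> evenT full.
suff sub u v : (forall z, z != u -> z != v -> colours_at adj c z = setT) ->
    colours_at adj c u \subset colours_at adj c v.
  by apply/eqP; rewrite eqEsubset !sub // => z zy zx; rewrite full.
move=> {}full; apply/subsetP => i hit_u; apply: contraTT (colour_class_even i).
move=> miss_v; have -> : [set z | i \in colours_at adj c z] = [set~ v].
  apply/setP => z; rewrite in_set in_setC1.
  have [-> | zv] := eqVneq z v; first exact: negbTE.
  by have [-> // | zu] := eqVneq z u; rewrite full ?inE.
have : (0 < #|T|)%N by apply/card_gt0P; exists v.
by rewrite cardsC1 negbK; case: #|T| evenT => //= n; rewrite negbK.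
Qed.

End ProperEdgeColouring.

Lemma edge_colourable_of_colouring (T S : finType) (adj : rel T) (k : nat)
    (C : {set S}) (s0 : S) (c : T -> T -> S) :
    s0 \in C -> (#|C| <= k)%N ->
    (forall u v, adj u v -> c u v = c v u) ->
    (forall u v, adj u v -> c u v \in C) ->
    (forall u v1 v2, adj u v1 -> adj u v2 -> c u v1 = c u v2 -> v1 = v2) ->
  edge_colourable adj k.
Proof.
move=> Cs0 leCk c_sym c_in c_inj.
exists (fun u v => widen_ord leCk (enum_rank_in Cs0 (c u v))); split.
  by move=> u v uv; rewrite c_sym.
move=> u v1 v2 uv1 uv2; apply: contra_neq => /(congr1 val) /= /val_inj.
by move/(enum_rank_in_inj (c_in _ _ uv1) (c_in _ _ uv2)); exact: c_inj.
Qed.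

Lemma val_Zp_lt p (a : 'Z_p) : (1 < p)%N -> (a < p)%N.
Proof. by case: p a => [|[|p]]. Qed.

Lemma val_Zp_opp p (a : 'Z_p) : (1 < p)%N -> a != 0 -> nat_of_ord (- a) = (p - a)%N.
Proof.
case: p a => [|[|p]] //= a _ a0; rewrite modn_small // ltn_subrL andbT lt0n.
by rewrite -val_eqE in a0.
Qed.

Section L1.

Variable w : nat.
Hypotheses (w_gt0 : (0 < w)%N) (w_even : ~~ odd w).

Local Notation Z := 'Z_(w + 1).
Local Notation adj := (@L1_adj w).

Let Z_gt1 : (1 < w + 1)%N. Proof. by rewrite addn1 ltnS. Qed.

Lemma card_L1_vert : #|{: L1_vert w}| = w.+2.
Proof. by rewrite card_option card_ord Zp_cast // addn1. Qed.

Lemma L1_nonedge_sym (a b : Z) : L1_nonedge a b = L1_nonedge b a.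
Proof.
rewrite /L1_nonedge; set E := [exists x, _]; set E' := [exists x, _].
have -> : E = E'.
  by apply: eq_existsb => x; rewrite orbC (andbC (b == x)) (andbC (b == - x)).
by case: E'; case: (a == 0); case: (b == 0); case: (a == 1); case: (b == 1);
  case: (a == 2%:R); case: (b == 2%:R).
Qed.

Lemma L1_adj_sym : symmetric adj.
Proof. by case=> [a|] [b|] //=; rewrite L1_nonedge_sym eq_sym. Qed.

Lemma L1_adj_irr : irreflexive adj.
Proof. by case=> [a|] //=; rewrite eqxx. Qed.

Lemma L1_nonedge_cases (a b : Z) : a != 1 -> a != 2%:R -> L1_nonedge a b ->
  b = - a \/ (a = 0 /\ b = 2%:R).
Proof.
move=> /negbTE a1 /negbTE a2; rewrite /L1_nonedge a1 a2 /= !orbF.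
case/orP=> [/existsP[x /and3P[_ _ /orP[]]] | /andP[/eqP -> /eqP ->]]; last by right.
  by case/andP=> /eqP -> /eqP ->; left.
by case/andP=> /eqP -> /eqP ->; left; rewrite opprK.
Qed.

Lemma L1_degree_ge v : v != Some 1 -> v != Some 2%:R -> (w <= degree adj v)%N.
Proof.
move=> v1 v2; pose m := if v is Some a then Some (if a == 0 then 2%:R else - a) else Some 1.
have sub : ~: [set v; m] \subset [set u | adj v u].
  apply/subsetP => u; rewrite !inE negb_or => /andP[uv um].
  case: v v1 v2 @m uv um => [a|] v1 v2 m; case: u => [b|] //=; rewrite ?(inj_eq Some_inj) //.
  move=> ba bm; rewrite eq_sym ba /=; apply/negP.
  have a1 : a != 1 by apply: contra_neq v1 => ->.
  have a2 : a != 2%:R by apply: contra_neq v2 => ->.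
  case/(L1_nonedge_cases a1 a2) => [b_opp | [a0 b2]]; last by rewrite a0 b2 !eqxx in bm.
  by move: ba bm; rewrite b_opp; have [->|_] := eqVneq a 0; rewrite ?oppr0 eqxx.
apply: leq_trans (subset_leq_card sub).
by rewrite cardsCs setCK card_L1_vert cards2; case: (v != m) => /=; lia.
Qed.

Lemma L1_nonedge_opp (a : Z) : a != 0 -> L1_nonedge a (- a).
Proof.
move=> a0; rewrite /L1_nonedge -!orbA; apply/orP; left; apply/existsP.
have a_gt0 : (0 < a)%N by rewrite lt0n; rewrite -val_eqE in a0.
have a_lt := val_Zp_lt a Z_gt1.
have w_half : w = (w./2 * 2)%N by rewrite muln2 even_halfK.
have [le_half | gt_half] := leqP a w./2; first by exists a; rewrite a_gt0 le_half !eqxx.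
exists (- a); rewrite val_Zp_opp // opprK !eqxx orbT andbT; apply/andP; split; lia.
Qed.

Let two_unit : (2%:R : Z) \is a GRing.unit.
Proof. by rewrite unitZpE // coprimen2 addn1 /= w_even. Qed.

Definition L1_colour (u v : L1_vert w) : Z :=
  match u, v with
  | Some a, Some b => (a + b) / 2%:R
  | Some a, None | None, Some a => if a == 0 then 1 else a
  | None, None => 0
  end.

Lemma L1_colour_sym u v : L1_colour u v = L1_colour v u.
Proof. by case: u v => [a|] [b|] //=; rewrite addrC. Qed.

Lemma L1_colour_neq0 u v : adj u v -> L1_colour u v != 0.
Proof.
case: u v => [a|] [b|] //= => [|_|_]; try by case: ifP => [_|/negbT]; rewrite ?oner_neq0.
case/andP=> ab; apply: contraNN => /eqP sum0.
have : a + b = 0 by apply: (can_inj (divrK two_unit)); rewrite sum0 mul0r.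
move/eqP; rewrite addrC addr_eq0 => /eqP b_opp; rewrite b_opp.
by apply: L1_nonedge_opp; apply: contra_neq ab => a0; rewrite b_opp a0 oppr0.
Qed.

Lemma L1_colour_neq_inf a b :
  adj (Some a) (Some b) -> L1_colour (Some a) (Some b) != L1_colour (Some a) None.
Proof.
case/andP=> ab nonedge_ab /=; apply/eqP => /(congr1 ( *%R^~ 2%:R)); rewrite divrK //.
have [a0 | _] := eqVneq a 0.
  by rewrite a0 add0r mul1r => b2; rewrite a0 b2 /L1_nonedge !eqxx /= !orbT in nonedge_ab.
by rewrite mulr_natr mulr2n => /addrI ba; rewrite ba eqxx in ab.
Qed.

Lemma L1_colour_inj u v1 v2 :
  adj u v1 -> adj u v2 -> L1_colour u v1 = L1_colour u v2 -> v1 = v2.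
Proof.
case: u v1 v2 => [a|] [b1|] [b2|] //= uv1 uv2.
- by move/(can_inj (divrK two_unit))/addrI => ->.
- by move=> eq_c; have := L1_colour_neq_inf uv1; rewrite /= eq_c eqxx.
- by move=> eq_c; have := L1_colour_neq_inf uv2; rewrite /= eq_c eqxx.
have [-> | _] := eqVneq b1 0; have [-> | _] := eqVneq b2 0 => // eq_c.
- by rewrite -eq_c eqxx in uv2.
- by rewrite eq_c eqxx in uv1.
- by rewrite eq_c.
Qed.

Lemma L1_edge_colourable : edge_colourable adj w.
Proof.
apply: (@edge_colourable_of_colouring _ _ _ _ [set~ 0] 1 L1_colour).
- by rewrite in_setC1 oner_neq0.
- by rewrite cardsC1 card_ord Zp_cast // addn1.
- by move=> u v _; apply: L1_colour_sym.
- by move=> u v uv; rewrite in_setC1 L1_colour_neq0.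
- exact: L1_colour_inj.
Qed.

Lemma L1_chromatic_index : chromatic_index_eq adj w.
Proof.
split=> [|j lt_jw [c c_proper]]; first exact: L1_edge_colourable.
have := leq_trans (L1_degree_ge (v := None) erefl erefl) (degree_le_colours c_proper None).
by rewrite leqNgt lt_jw.
Qed.

Lemma L1_colours_at_1_2 (c : L1_vert w -> L1_vert w -> 'I_w) :
  proper_edge_colouring adj c -> colours_at adj c (Some 1) = colours_at adj c (Some 2%:R).
Proof.
move=> c_proper; apply: (colours_at_eq_of_full c_proper L1_adj_sym L1_adj_irr) => [|v v1 v2].
  by rewrite card_L1_vert /= negbK.
exact: colours_at_full c_proper _ (L1_degree_ge v1 v2).
Qed.

End L1.

Theorem lemma12 (w : nat) (hw4 : (4 <= w)%N) (hwe : ~~ odd w) :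
  chromatic_index_eq (@L1_adj w) w /\
  (forall c : L1_vert w -> L1_vert w -> 'I_w,
     proper_edge_colouring (@L1_adj w) c ->
     colours_at (@L1_adj w) c (Some 1) = colours_at (@L1_adj w) c (Some 2%:R)).
Proof.
have w_gt0 : (0 < w)%N by apply: leq_trans hw4.
split; first exact: L1_chromatic_index w_gt0 hwe.
exact: L1_colours_at_1_2 w_gt0 hwe.
Qed.
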